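(* Let $N>3$. The maximum, over all behaviors $P\in\mathcal{J}_{N,2}$, of $$\frac{1}{N+1}P(0|0\cdots0)+\frac{1}{N+1}\sum_{k=1}^NP(1|e_k)-\frac{N}{N+1}$$ equals $$|\delta_{I2}|=\frac{2}{(N-2)(N-1)(N+1)},$$ and it is achieved by a behavior in $\mathcal{J}_{N,2}$ with $P(0|0\cdots0)=\frac{2}{N^2-3N+2}$ and $P(1|e_k)=1$ for all $k=1,\dots,N$.
   Context: A behavior on $N$ bits is a family $(P(a|\mathbf{x}))_{a\in\{0,1\},\mathbf{x}\in\{0,1\}^N}$ with $P(a|\mathbf{x})\ge0$ and $P(0|\mathbf{x})+P(1|\mathbf{x})=1$. $\mathcal{J}_{N,2}$ (the second-order interference set) is the set of behaviors satisfying, for every $M>2$, every subset $\{j_1,\dots,j_M\}\subseteq\{1,\dots,N\}$ and every fixed value of the remaining bits, $\sum_{x_{j_1},\dots,x_{j_M}\in\{0,1\}}(-1)^{\sum_lx_{j_l}}P(0|\mathbf{x})=0$. $e_k\in\{0,1\}^N$ is the string with a single $1$ in position $k$. *)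

From mathcomp Require Import all_boot all_order all_algebra.
Set Implicit Arguments. Unset Strict Implicit. Unset Printing Implicit Defensive.
Import Order.TTheory GRing.Theory Num.Theory.
Local Open Scope ring_scope.

(* Bit strings of length N: x : bits N, bit k is x k; bit value 0 = false, 1 = true. *)
Notation bits N := {ffun 'I_N -> bool}.

(* A behavior: P a x is P(a|x), with a : bool (false = 0, true = 1). *)
Definition is_behavior (R : numDomainType) (N : nat) (P : bool -> bits N -> R) : Prop :=
  (forall a x, 0 <= P a x) /\ (forall x, P false x + P true x = 1).

Definition zero_str (N : nat) : bits N := [ffun _ => false].
Definition e_str (N : nat) (k : 'I_N) : bits N := [ffun i => i == k].

Definition in_J2 (R : numDomainType) (N : nat) (P : bool -> bits N -> R) : Prop :=
  is_behavior P /\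
  forall (S : {set 'I_N}), (2 < #|S|)%N ->
  forall x : bits N,
    \sum_(y : bits N | [forall i in ~: S, y i == x i])
       (-1) ^+ #|[set i in S | y i]| * P false y = 0.

Definition objective (R : numFieldType) (N : nat) (P : bool -> bits N -> R) : R :=
  (N.+1%:R)^-1 * P false (zero_str N)
  + (N.+1%:R)^-1 * \sum_(k < N) P true (e_str k)
  - N%:R / N.+1%:R.

From mathcomp Require Import all_boot all_order all_algebra.
From mathcomp Require Import ring lra zify.
Set Implicit Arguments. Unset Strict Implicit. Unset Printing Implicit Defensive.
Import Order.TTheory GRing.Theory Num.Theory.
Local Open Scope ring_scope.

(** Write F(U) = P(0|1_U) for U a set of positions. Taking the bits outside S
    to be 0, the J_{N,2} constraints say that the Moebius transform
    g(S) = sum_(U <= S) (-1)^|U| F(U) vanishes for |S| > 2. Inverting it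
    expresses F([N]) through the values of F on sets of size at most 2:
      F([N]) = (N-1)(N-2)/2 F({}) - (N-2) sum_k F({k}) + sum_(|U| = 2) F(U).
    As 0 <= F <= 1, this gives (N-1)(N-2)/2 F({}) - (N-2) sum_k F({k}) <= 1,
    which bounds the objective (F({}) - sum_k F({k}))/(N+1).
    The bound is attained by P(0|y) = (w-1)(w-2)/((N-1)(N-2)), w the Hamming
    weight of y: this is sum_(|V| <= 2) (-1)^|V| prod_(i in V) y_i up to a
    constant, a polynomial of degree 2 in the bits, so it satisfies all the
    interference constraints of order > 2; it vanishes on every e_k and
    takes the value 1 on the all-ones string. *)

Section Toggle.
Variable T : finType.
Implicit Types (a : T) (A B S U : {set T}).

Definition toggle a S := if a \in S then S :\ a else a |: S.

Lemma in_toggle a S i : (i \in toggle a S) = if i == a then a \notin S else i \in S.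
Proof.
rewrite /toggle; case: (eqVneq i a) => [->|ia]; case: ifP => aS;
  by rewrite !inE ?eqxx ?aS ?(negPf ia).
Qed.

Lemma toggleK a : involutive (toggle a).
Proof.
move=> S; apply/setP => i; rewrite !in_toggle.
by case: (eqVneq i a) => [->|]; rewrite ?in_toggle ?eqxx ?negbK.
Qed.

Lemma subset_toggle a A U : a \notin A -> (A \subset toggle a U) = (A \subset U).
Proof.
move=> aA; apply/subsetP/subsetP => AU i iA; have := AU i iA;
  by rewrite in_toggle; case: eqP => // eia; move: aA; rewrite -eia iA.
Qed.

Lemma sign_toggle (R : pzRingType) a B S : a \in B ->
  (-1) ^+ #|B :&: toggle a S| = - (-1) ^+ #|B :&: S| :> R.
Proof.
move=> aB; rewrite (cardsD1 a (B :&: toggle a S)) (cardsD1 a (B :&: S)).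
have -> : (B :&: toggle a S) :\ a = (B :&: S) :\ a.
  by apply/setP => i; rewrite !inE in_toggle; case: eqP.
rewrite !inE aB in_toggle eqxx /=.
by case: (a \in S); rewrite /= exprS mulN1r ?opprK.
Qed.

Lemma sign_toggleT (R : pzRingType) a S : (-1) ^+ #|toggle a S| = - (-1) ^+ #|S| :> R.
Proof. by rewrite -[toggle a S]setTI -[S in RHS]setTI sign_toggle ?inE. Qed.

Lemma sum_toggle_eq0 (R : numDomainType) a (P : pred {set T}) (h : {set T} -> R) :
  (forall S, P (toggle a S) = P S) -> (forall S, h (toggle a S) = - h S) ->
  \sum_(S | P S) h S = 0.
Proof.
move=> Ptog htog; apply/eqP; rewrite -eqNr -sumrN; apply/eqP.
rewrite (reindex_inj (can_inj (toggleK a))) /=.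
by apply: eq_big => [S|S _]; rewrite ?Ptog // htog opprK.
Qed.

End Toggle.

Section AlternatingSums.
Variable T : finType.
Implicit Types (a : T) (A S U V : {set T}).

Lemma sum_sign_superset (R : numDomainType) U :
  \sum_(S : {set T} | U \subset S) (-1) ^+ #|S| = if U == setT then (-1) ^+ #|T| else 0 :> R.
Proof.
case: eqVneq => [->|UT].
  by rewrite (big_pred1 setT) ?cardsT // => S; rewrite /= subTset.
have [a _ aU] : exists2 a, a \in setT & a \notin U by apply/subsetPn; rewrite subTset.
by apply: (sum_toggle_eq0 (a := a)) => S; rewrite ?subset_toggle ?sign_toggleT.
Qed.

Lemma mobius_sign_inversion (R : numDomainType) (F : {set T} -> R) :
  \sum_(S : {set T}) (-1) ^+ #|S| * \sum_(U : {set T} | U \subset S) (-1) ^+ #|U| * F U = F setT.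
Proof.
under eq_bigr do rewrite big_distrr.
rewrite (exchange_big_dep predT) //=.
under eq_bigr do rewrite -mulr_suml sum_sign_superset.
rewrite (bigD1 setT) //= big1 => [|U /negPf->]; last by rewrite mul0r.
by rewrite eqxx cardsT mulrA -expr2 sqrr_sign mul1r addr0.
Qed.

Lemma sum_sign_subset_card (R : pzRingType) A k :
  \sum_(V : {set T} | (V \subset A) && (#|V| == k)) (-1) ^+ #|V| = (-1) ^+ k * 'C(#|A|, k)%:R :> R.
Proof.
rewrite (eq_bigr (fun _ => (-1) ^+ k)) => [|V /andP[_ /eqP->]//].
rewrite -(cards_draws A k) mulr_natr -sumr_const.
by apply: eq_bigl => V; rewrite inE.
Qed.

Lemma sum_sign_subset_card_leq (R : pzRingType) A m :
  \sum_(V : {set T} | (V \subset A) && (#|V| <= m)%N) (-1) ^+ #|V|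
    = \sum_(k < m.+1) (-1) ^+ k * 'C(#|A|, k)%:R :> R.
Proof.
elim: m => [|m IHm].
  by rewrite big_ord1 -sum_sign_subset_card; apply: eq_bigl => V; rewrite leqn0.
rewrite big_ord_recr /= -IHm -sum_sign_subset_card.
rewrite (bigID (fun V => #|V| <= m)%N) /=; congr (_ + _); apply: eq_bigl => V.
  by case: (V \subset A); rewrite //= andb_idl // => /leqW.
by rewrite -andbA -ltnNge eqn_leq andbC.
Qed.

Definition altsum2 (R : pzRingType) A : R :=
  \sum_(V : {set T} | (V \subset A) && (#|V| <= 2)%N) (-1) ^+ #|V|.

Lemma natr_bin2 (R : comPzRingType) n : 'C(n, 2)%:R * 2 = n%:R * (n%:R - 1) :> R.
Proof.
elim: n => [|n IHn]; first by rewrite bin0n !mul0r.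
by rewrite binS bin1 natrD mulrDl IHn -addn1 natrD; ring.
Qed.

Lemma altsum2E (R : numFieldType) A :
  altsum2 R A = (#|A|%:R - 1) * (#|A|%:R - 2) / 2.
Proof.
rewrite /altsum2 sum_sign_subset_card_leq !big_ord_recr big_ord0 /=.
have CE : 'C(#|A|, 2)%:R = #|A|%:R * (#|A|%:R - 1) / 2 :> R.
  by rewrite -natr_bin2 mulfK ?pnatr_eq0.
by rewrite bin0 bin1 CE expr0 expr1 sqrrN expr1n; field.
Qed.

Definition low_order_coef (R : pzRingType) U : R :=
  \sum_(S : {set T} | (#|S| <= 2)%N && (U \subset S)) (-1) ^+ #|S|.

Lemma low_order_expansion (R : numDomainType) (F : {set T} -> R) :
  (forall S, (2 < #|S|)%N -> \sum_(U : {set T} | U \subset S) (-1) ^+ #|U| * F U = 0) ->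
  F setT = \sum_U low_order_coef R U * ((-1) ^+ #|U| * F U).
Proof.
move=> F_vanish; rewrite -mobius_sign_inversion (bigID (fun S : {set T} => #|S| <= 2)%N) /=.
rewrite [X in _ + X]big1 ?addr0 => [|S]; last by rewrite -ltnNge => /F_vanish->; rewrite mulr0.
under eq_bigr do rewrite big_distrr.
rewrite (exchange_big_dep predT) //=.
by under eq_bigr do rewrite -mulr_suml.
Qed.

Lemma low_order_coef_set0 (R : pzRingType) : low_order_coef R set0 = altsum2 R setT.
Proof. by apply: eq_bigl => S; rewrite sub0set subsetT andbT. Qed.

Lemma low_order_coef_set1 (R : numFieldType) a : low_order_coef R [set a] = #|T|%:R - 2.
Proof.
have -> : low_order_coef R [set a] = altsum2 R setT - altsum2 R [set~ a].
  rewrite [altsum2 R [set~ a]]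
    (eq_bigl (fun S => (S \subset setT) && (#|S| <= 2)%N && (a \notin S))) => [|S].
    rewrite /altsum2 (bigID (fun S => a \in S)) addrK.
    by apply: eq_bigl => S; rewrite subsetT sub1set andbC.
  by rewrite subsetT subsetC sub1set !inE andbC.
rewrite !altsum2E cardsT -(cardsC [set a]) cards1 natrD.
by field.
Qed.

Lemma low_order_coef_card_gt1 (R : pzRingType) U :
  (1 < #|U|)%N -> low_order_coef R U = (#|U| == 2)%:R.
Proof.
move=> U_gt1; case: (eqVneq #|U| 2) => [U2|U_neq2].
  rewrite /low_order_coef (big_pred1 U) => [|S]; first by rewrite U2 sqrrN expr1n.
  by rewrite /= eq_sym eqEcard U2 andbC.
rewrite /low_order_coef big_pred0 // => S; apply/negP => /andP[S_le2 /subset_leq_card US]; lia.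
Qed.

Lemma sum_card1 (R : nmodType) (h : {set T} -> R) :
  \sum_(U : {set T} | #|U| == 1) h U = \sum_a h [set a].
Proof.
rewrite -(big_imset h (in2W (@set1_inj T))); apply: eq_bigl => U.
by apply/cards1P/imsetP => [[a ->]|[a _ ->]]; exists a.
Qed.

Lemma low_order_lower_bound (R : realFieldType) (F : {set T} -> R) :
  (forall U, 0 <= F U) ->
  (forall S, (2 < #|S|)%N -> \sum_(U : {set T} | U \subset S) (-1) ^+ #|U| * F U = 0) ->
  altsum2 R setT * F set0 - (#|T|%:R - 2) * \sum_a F [set a] <= F setT.
Proof.
move=> F_ge0 F_vanish; rewrite (low_order_expansion F_vanish) (bigD1 set0) //=.
rewrite low_order_coef_set0 cards0 expr0 mul1r lerD2l (bigID (fun U : {set T} => #|U| == 1)) /=.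
have -> : \sum_(U | (U != set0) && (#|U| == 1)) low_order_coef R U * ((-1) ^+ #|U| * F U)
    = - ((#|T|%:R - 2) * \sum_a F [set a]).
  rewrite (eq_bigl (fun U : {set T} => #|U| == 1)) => [|U]; last first.
    by rewrite andb_idl // => /eqP U1; rewrite -card_gt0 U1.
  rewrite sum_card1 mulr_sumr -sumrN; apply: eq_bigr => a _.
  by rewrite low_order_coef_set1 cards1 expr1 mulN1r mulrN.
rewrite lerDl; apply: sumr_ge0 => U /andP[U0 U1].
have U_gt1 : (1 < #|U|)%N by move: U0 U1; rewrite -card_gt0; lia.
rewrite low_order_coef_card_gt1 //; case: eqP => [->|_]; last by rewrite mul0r.
by rewrite mul1r sqrrN expr1n mul1r.
Qed.

End AlternatingSums.

Section AltSum2Bounds.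
Variables (R : realFieldType) (T : finType).
Implicit Types A : {set T}.

Lemma altsum2_set0 : altsum2 R (set0 : {set T}) = 1.
Proof. by rewrite altsum2E cards0; field. Qed.

Lemma altsum2_set1 (a : T) : altsum2 R [set a] = 0.
Proof. by rewrite altsum2E cards1 subrr mul0r mul0r. Qed.

Lemma altsum2_ge0 A : 0 <= altsum2 R A.
Proof.
rewrite altsum2E divr_ge0 //; case: #|A| => [|[|n]]; rewrite ?subrr ?mul0r //.
  by rewrite !sub0r mulrNN mulr_ge0 ?ler0n.
have n_ge0 : 0 <= n%:R :> R by [].
rewrite -addn2 natrD; nra.
Qed.

Lemma altsum2_le_setT A : (2 < #|T|)%N -> altsum2 R A <= altsum2 R [set: T].
Proof.
move=> T_gt2; rewrite !altsum2E cardsT ler_pM2r ?invr_gt0 ?ltr0n //.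
have := max_card A; rewrite -(ler_nat R) => A_le.
have T_ge3 : 3 <= #|T|%:R :> R by rewrite (ler_nat R 3).
case: #|A| A_le => [|n] A_le; first by nra.
have n_ge0 : 0 <= n%:R :> R by [].
rewrite -addn1 natrD in A_le *; nra.
Qed.

End AltSum2Bounds.

Section BitStrings.
Variable T : finType.
Implicit Types (S U : {set T}) (x y : {ffun T -> bool}).

Definition bits_of_set U : {ffun T -> bool} := [ffun i => i \in U].

Lemma bits_of_setK : cancel bits_of_set (fun y => [set i | y i]).
Proof. by move=> U; apply/setP => i; rewrite inE ffunE. Qed.

Lemma set_of_bitsK : cancel (fun y => [set i | y i]) bits_of_set.
Proof. by move=> y; apply/ffunP => i; rewrite ffunE inE. Qed.

Lemma interference_as_sets (R : pzRingType) (f : {ffun T -> bool} -> R) S x :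
  \sum_(y : {ffun T -> bool} | [forall i in ~: S, y i == x i])
      (-1) ^+ #|[set i in S | y i]| * f y
  = \sum_(U : {set T} | [forall i in ~: S, (i \in U) == x i])
      (-1) ^+ #|S :&: U| * f (bits_of_set U).
Proof.
rewrite (reindex bits_of_set) /=; last by exists (fun y => [set i | y i]) => y _;
  rewrite ?bits_of_setK ?set_of_bitsK.
apply: eq_big => [U|U _]; first by apply: eq_forallb => i; rewrite ffunE.
suff -> : [set i in S | bits_of_set U i] = S :&: U by [].
by apply/setP => i; rewrite !inE ffunE.
Qed.

Lemma interference_altsum2 (R : numDomainType) S x : (2 < #|S|)%N ->
  \sum_(y : {ffun T -> bool} | [forall i in ~: S, y i == x i])
     (-1) ^+ #|[set i in S | y i]| * altsum2 R [set i | y i] = 0.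
Proof.
move=> S_gt2; rewrite interference_as_sets.
under eq_bigr do rewrite bits_of_setK big_distrr.
rewrite (exchange_big_dep (fun V : {set T} => #|V| <= 2)%N) /= => [|U V _ /andP[]//].
apply: big1 => V V_le2.
have [a aS aV] : exists2 a, a \in S & a \notin V.
  by apply/subsetPn/negP => /subset_leq_card; lia.
apply: (sum_toggle_eq0 (a := a)) => U; last by rewrite sign_toggle // !mulNr.
rewrite subset_toggle //; congr (_ && _); apply: eq_forallb_in => i.
by rewrite inE in_toggle; case: (eqVneq i a) => [->|]; rewrite ?aS.
Qed.

End BitStrings.

Section Behaviors.
Variables (R : realFieldType) (N : nat).
Implicit Types (P : bool -> bits N -> R) (S : {set 'I_N}).

Lemma zero_strE : zero_str N = bits_of_set set0.
Proof. by apply/ffunP => i; rewrite !ffunE inE. Qed.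

Lemma e_strE (k : 'I_N) : e_str k = bits_of_set [set k].
Proof. by apply/ffunP => i; rewrite !ffunE inE. Qed.

Lemma objectiveE P : is_behavior P ->
  objective P = (P false (zero_str N) - \sum_(k < N) P false (e_str k)) / N.+1%:R.
Proof.
move=> [_ P_sum]; rewrite /objective.
have P_true x : P true x = 1 - P false x by rewrite -(P_sum x) addrAC subrr add0r.
under eq_bigr do rewrite P_true.
by rewrite sumrB sumr_const card_ord; field; rewrite nat1r pnatr_eq0.
Qed.

Lemma in_J2_sum_subset_eq0 P S : in_J2 P -> (2 < #|S|)%N ->
  \sum_(U : {set 'I_N} | U \subset S) (-1) ^+ #|U| * P false (bits_of_set U) = 0.
Proof.
move=> [_ P_J] S_gt2; rewrite -[RHS](P_J S S_gt2 (zero_str N)) interference_as_sets.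
apply: eq_big => [U|U US]; last by rewrite (setIidPr US).
apply/subsetP/forall_inP => [US i|U_out i iU].
  by rewrite inE ffunE eqbF_neg; apply: contra => /US.
by apply: contraT => iS; have := U_out i; rewrite inE iS ffunE iU => /(_ isT).
Qed.

End Behaviors.

Lemma objective_bound_arith (R : realFieldType) (n a s : R) : 4 <= n -> 0 <= s ->
  (n - 1) * (n - 2) / 2 * a - (n - 2) * s <= 1 ->
  (a - s) / (n + 1) <= 2 / ((n - 2) * (n - 1) * (n + 1)).
Proof.
move=> n_ge4 s_ge0 bound.
(* (a - s)(n - 2)(n - 1) is twice the left side of [bound] minus (n - 2)(n - 3) s. *)
have key : (a - s) * ((n - 2) * (n - 1)) <= 2.
  have : 0 <= (n - 2) * (n - 3) * s by rewrite !mulr_ge0 // subr_ge0; lra.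
  nra.
have -> : (a - s) / (n + 1) = (a - s) * ((n - 2) * (n - 1)) / ((n - 2) * (n - 1) * (n + 1)).
  by field; apply/and3P; split; apply/eqP; lra.
by rewrite ler_pM2r // invr_gt0 !mulr_gt0 //; lra.
Qed.

Lemma objective_le_J2 (R : realFieldType) N (P : bool -> bits N -> R) : (3 < N)%N ->
  in_J2 P -> objective P <= 2 / ((N%:R - 2) * (N%:R - 1) * (N%:R + 1)).
Proof.
move=> N_gt3 P_J2; have [[P_ge0 P_sum] _] := P_J2.
pose F U := P false (bits_of_set U).
have := low_order_lower_bound (fun U => P_ge0 false _ : 0 <= F U)
  (fun S => in_J2_sum_subset_eq0 P_J2).
rewrite altsum2E !cardsT card_ord => /le_trans F_bound.
rewrite objectiveE // zero_strE -natr1; under eq_bigr do rewrite e_strE.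
apply: objective_bound_arith; first by rewrite (ler_nat R 4).
  exact: sumr_ge0.
by apply: F_bound; rewrite /F -(P_sum (bits_of_set setT)) lerDl.
Qed.

Definition behavior_of (R : pzRingType) N (p : bits N -> R) (b : bool) (y : bits N) : R :=
  if b then 1 - p y else p y.

Lemma is_behavior_of (R : numDomainType) N (p : bits N -> R) :
  (forall y, 0 <= p y <= 1) -> is_behavior (behavior_of p).
Proof.
move=> p_bounds; split=> [[] y|y]; last by rewrite /= addrC subrK.
  by rewrite /= subr_ge0; case/andP: (p_bounds y).
by case/andP: (p_bounds y).
Qed.

Definition optimal_p0 (R : numFieldType) N (y : bits N) : R :=
  altsum2 R [set i | y i] / altsum2 R [set: 'I_N].

Section OptimalBehavior.
Variables (R : realFieldType) (N : nat).

Lemma optimal_p0_bounds (y : bits N) : (2 < N)%N -> 0 <= optimal_p0 R y <= 1.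
Proof.
rewrite -[N in (_ < N)%N]card_ord => N_gt2.
have le_setT A := altsum2_le_setT R A N_gt2.
have D_gt0 : 0 < altsum2 R [set: 'I_N].
  by apply: lt_le_trans (le_setT set0); rewrite altsum2_set0.
by rewrite /optimal_p0 ler_pdivrMr // mul1r le_setT andbT divr_ge0 ?altsum2_ge0 ?ltW.
Qed.

Lemma optimal_p0_interference (S : {set 'I_N}) (x : bits N) : (2 < #|S|)%N ->
  \sum_(y : bits N | [forall i in ~: S, y i == x i])
     (-1) ^+ #|[set i in S | y i]| * optimal_p0 R y = 0.
Proof.
move=> S_gt2; under eq_bigr do rewrite mulrA.
by rewrite -mulr_suml interference_altsum2 // mul0r.
Qed.

Lemma optimal_p0_zero : optimal_p0 R (zero_str N) = (altsum2 R [set: 'I_N])^-1.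
Proof. by rewrite /optimal_p0 zero_strE bits_of_setK altsum2_set0 mul1r. Qed.

Lemma optimal_p0_e (k : 'I_N) : optimal_p0 R (e_str k) = 0.
Proof. by rewrite /optimal_p0 e_strE bits_of_setK altsum2_set1 mul0r. Qed.

End OptimalBehavior.

Theorem theorem2 (R : realFieldType) (N : nat) (hN : (3 < N)%N) :
  (forall P : bool -> {ffun 'I_N -> bool} -> R, in_J2 P ->
     objective P <= 2 / ((N%:R - 2) * (N%:R - 1) * (N%:R + 1))) /\
  (exists P : bool -> {ffun 'I_N -> bool} -> R,
     [/\ in_J2 P,
         objective P = 2 / ((N%:R - 2) * (N%:R - 1) * (N%:R + 1)),
         P false (zero_str N) = 2 / (N%:R ^+ 2 - 3 * N%:R + 2)
       & forall k : 'I_N, P true (e_str k) = 1]).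
Proof.
split=> [P|]; first exact: objective_le_J2.
have N_ge4 : 4 <= N%:R :> R by rewrite (ler_nat R 4).
have altsum2T : altsum2 R [set: 'I_N] = (N%:R - 1) * (N%:R - 2) / 2.
  by rewrite altsum2E cardsT card_ord.
have P_behavior : is_behavior (behavior_of (optimal_p0 R (N:=N))).
  by apply: is_behavior_of => y; apply: optimal_p0_bounds; lia.
exists (behavior_of (optimal_p0 R (N:=N))); split.
- by split=> // S S_gt2 x; apply: optimal_p0_interference.
- rewrite objectiveE //= optimal_p0_zero big1 => [|k _]; last exact: optimal_p0_e.
  by rewrite altsum2T; field; apply/and3P; split; apply/eqP; lra.
- by rewrite /= optimal_p0_zero altsum2T; field; apply/and3P; split; apply/eqP; nra.
- by move=> k; rewrite /= optimal_p0_e subr0.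
Qed.
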